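(* Let $v_0\in\mathbb{R}^n$ be a unit vector, $\tau>0$, $\epsilon\ge 0$, and let $A\in\mathbb{R}^{n^2\times n}$. Let $T=\tau(v_0\otimes v_0)v_0^T+A\in\mathbb{R}^{n^2\times n}$. Suppose $A^TA=C\cdot\mathrm{Id}_{n\times n}+E$ for some real $C\ge 0$ and a matrix $E$ with $\|E\|\le\epsilon\tau^2$, and that $\|A^T(v_0\otimes v_0)\|\le\epsilon\tau$. Then every unit top eigenvector $u$ of $T^TT$ satisfies $\langle u,v_0\rangle^2\ge 1-O(\epsilon)$.
   Context: $T$ is the $n^2\times n$ unfolding of the tensor $\tau v_0^{\otimes3}+\mathbf{A}$, with $T[(j,k),i]=\mathbf{T}_{ijk}$; norms are operator norms. *)

From HB Require Import structures.
From mathcomp Require Import all_boot all_order all_algebra.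
Set Implicit Arguments. Unset Strict Implicit. Unset Printing Implicit Defensive.
Import Order.TTheory GRing.Theory Num.Theory.
Local Open Scope ring_scope.

Definition vnorm (R : rcfType) (m : nat) (v : 'cV[R]_m) : R :=
  Num.sqrt (\sum_(i < m) v i 0 ^+ 2).

Definition vdot (R : rcfType) (m : nat) (u v : 'cV[R]_m) : R :=
  (u^T *m v) 0 0.

Definition opnorm_le (R : rcfType) (m k : nat) (M : 'M[R]_(m, k)) (c : R) : Prop :=
  forall x : 'cV[R]_k, vnorm (M *m x) <= c * vnorm x.

(* v (x) v in R^{n^2}, entry at index of (j,k) is v_j v_k. *)
Definition kron2 (R : rcfType) (n : nat) (v : 'cV[R]_n) : 'cV[R]_(n * n) :=
  (mxvec (v *m v^T))^T.

Definition top_eigenvector (R : rcfType) (n : nat) (M : 'M[R]_n) (u : 'cV[R]_n) : Prop :=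
  exists lam : R,
    [/\ u != 0, M *m u = lam *: u &
        forall (mu : R) (w : 'cV[R]_n), w != 0 -> M *m w = mu *: w -> mu <= lam].

(* The top eigenvalue of the symmetric matrix T^T T dominates its Rayleigh
   quotient at v0 (spectral theorem over R[i]; the real or imaginary part of a
   complex eigenvector of a real matrix is a real eigenvector).  Expanding both
   Rayleigh quotients with A^T A = C + E, the C terms cancel and, writing
   c = <u, v0> and w = A^T (v0 (x) v0),
     tau^2 (1 - c^2) <= 2 tau (c <w, u> - <w, v0>) + u^T E u - v0^T E v0
                     <= 6 eps tau^2,
   so K = 6 works. *)
From HB Require Import structures.
From mathcomp Require Import all_boot all_order all_algebra.
From mathcomp Require Import ring lra.
From mathcomp Require Import complex spectral sesquilinear.
Import Order.TTheory GRing.Theory Num.Theory.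
Local Open Scope ring_scope.
Set Implicit Arguments. Unset Strict Implicit.

Section RealDot.
Variables (R : rcfType) (m : nat).
Implicit Types (u v w x y : 'cV[R]_m) (a : R).

Lemma vdotE u v : vdot u v = \sum_i u i 0 * v i 0.
Proof. by rewrite /vdot mxE; apply: eq_bigr => i _; rewrite mxE. Qed.

Lemma vdotC u v : vdot u v = vdot v u.
Proof. by rewrite !vdotE; apply: eq_bigr => i _; rewrite mulrC. Qed.

Lemma vdotDr u v w : vdot u (v + w) = vdot u v + vdot u w.
Proof. by rewrite !vdotE -big_split; apply: eq_bigr => i _; rewrite mxE mulrDr. Qed.

Lemma vdotDl u v w : vdot (v + w) u = vdot v u + vdot w u.
Proof. by rewrite vdotC vdotDr !(vdotC u). Qed.

Lemma vdotZr a u v : vdot u (a *: v) = a * vdot u v.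
Proof. by rewrite !vdotE mulr_sumr; apply: eq_bigr => i _; rewrite mxE mulrCA. Qed.

Lemma vdotZl a u v : vdot (a *: v) u = a * vdot v u.
Proof. by rewrite vdotC vdotZr vdotC. Qed.

Lemma vdotNr u v : vdot u (- v) = - vdot u v.
Proof. by rewrite -scaleN1r vdotZr mulN1r. Qed.

Lemma vdotNl u v : vdot (- v) u = - vdot v u.
Proof. by rewrite vdotC vdotNr vdotC. Qed.

Lemma vdot_ge0 u : 0 <= vdot u u.
Proof. by rewrite vdotE sumr_ge0 // => i _; rewrite -expr2 sqr_ge0. Qed.

Lemma vnormE u : vnorm u = Num.sqrt (vdot u u).
Proof. by rewrite /vnorm vdotE; congr Num.sqrt; apply: eq_bigr => i _; rewrite expr2. Qed.

Lemma vdot_unit u : vnorm u = 1 -> vdot u u = 1.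
Proof. by rewrite vnormE => u1; rewrite -[LHS]sqr_sqrtr ?vdot_ge0 // u1 expr1n. Qed.

Lemma normr_vdot_unit_le x y : vdot x x = 1 -> `|vdot x y| <= vnorm y.
Proof.
move=> x1; set c := vdot x y.
have := vdot_ge0 (y - c *: x).
rewrite vdotDl !vdotDr !vdotNl !vdotNr !vdotZl !vdotZr x1 (vdotC y x) -/c => ge0.
by rewrite vnormE -sqrtr_sqr ler_sqrt ?vdot_ge0 // expr2; nra.
Qed.

End RealDot.

Lemma vdot_mulmx (R : rcfType) m k (A : 'M[R]_(m, k)) x y :
  vdot (A *m x) y = vdot x (A^T *m y).
Proof. by rewrite /vdot trmx_mul mulmxA. Qed.

Lemma opnorm_le_form (R : rcfType) m (E : 'M[R]_m) c x :
  opnorm_le E c -> vnorm x = 1 -> `|vdot x (E *m x)| <= c.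
Proof.
move=> Ec x1; apply: le_trans (normr_vdot_unit_le _ (vdot_unit x1)) _.
by apply: le_trans (Ec x) _; rewrite x1 mulr1.
Qed.

Lemma sum_mxvec (R : nmodType) m n (F : 'I_(m * n) -> R) :
  \sum_k F k = \sum_i \sum_j F (mxvec_index i j).
Proof.
rewrite (reindex _ (curry_mxvec_bij m n)) /=.
by rewrite pair_bigA /=; apply: eq_bigr => -[i j].
Qed.

Lemma vdot_kron2 (R : rcfType) n (v : 'cV[R]_n) :
  vdot (kron2 v) (kron2 v) = vdot v v ^+ 2.
Proof.
rewrite vdotE sum_mxvec expr2 vdotE mulr_suml; apply: eq_bigr => i _.
rewrite mulr_sumr; apply: eq_bigr => j _.
by rewrite /kron2 !mxE mxvecE !mxE big_ord1 !mxE; ring.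
Qed.

Section SpikedGram.
Variables (R : rcfType) (n : nat) (v0 : 'cV[R]_n) (tau C : R).
Variables (A : 'M[R]_(n * n, n)) (E : 'M[R]_n).
Hypotheses (v0_unit : vdot v0 v0 = 1) (gramA : A^T *m A = C%:M + E).
Let T := tau *: (kron2 v0 *m v0^T) + A.

Lemma spiked_gram_form x :
  vdot x ((T^T *m T) *m x) =
    tau ^+ 2 * vdot v0 x ^+ 2 + 2 * tau * vdot v0 x * vdot (A^T *m kron2 v0) x
    + C * vdot x x + vdot x (E *m x).
Proof.
have v0x : v0^T *m x = (vdot v0 x)%:M.
  by apply/matrixP => i j; rewrite !ord1 [RHS]mxE eqxx mulr1n.
have Tx : T *m x = (tau * vdot v0 x) *: kron2 v0 + A *m x.
  by rewrite /T mulmxDl -scalemxAl -mulmxA v0x mul_mx_scalar scalerA.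
have cross : vdot (kron2 v0) (A *m x) = vdot (A^T *m kron2 v0) x.
  by rewrite vdot_mulmx trmxK.
have Ax2 : vdot (A *m x) (A *m x) = C * vdot x x + vdot x (E *m x).
  by rewrite vdot_mulmx mulmxA gramA mulmxDl mul_scalar_mx vdotDr vdotZr.
rewrite -mulmxA -vdot_mulmx Tx vdotDl !vdotDr !vdotZl !vdotZr vdot_kron2 v0_unit.
by rewrite cross (vdotC (A *m x)) cross Ax2; ring.
Qed.

End SpikedGram.

Section Hermitian.
Local Open Scope sesquilinear_scope.
Variables (C : numClosedFieldType) (n : nat).

Lemma diag_form_le (d : 'rV[C]_n) k (y : 'cV[C]_n) :
  (forall i, d 0 i <= d 0 k) ->
  (y^t* *m (diag_mx d *m y)) 0 0 <= d 0 k * (y^t* *m y) 0 0.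
Proof.
move=> dk; rewrite mul_diag_mx !mxE mulr_sumr; apply: ler_sum => i _.
rewrite !mxE mulrCA ler_wpM2r ?dk //.
by rewrite mulrC mul_conjC_ge0.
Qed.

Lemma unitary_spectral_eigen (P : 'M[C]_n) (d : 'rV[C]_n) k :
  P \is unitarymx -> exists2 z : 'cV[C]_n, z != 0 & (P^t* *m diag_mx d *m P) *m z = d 0 k *: z.
Proof.
move=> /unitarymxP PPt; exists (P^t* *m delta_mx k 0).
  apply: contraTneq isT => z0; have := congr1 (mulmx P) z0.
  rewrite mulmxA PPt mul1mx mulmx0 => /matrixP/(_ k 0)/eqP.
  by rewrite !mxE !eqxx oner_eq0.
have De : diag_mx d *m delta_mx k 0 = d 0 k *: delta_mx k 0 :> 'cV_n.
  apply/matrixP => i j; rewrite mul_diag_mx !mxE.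
  by case: (eqVneq i k) => [->|]; rewrite ?mulr0 ?mulr1.
by rewrite -!mulmxA (mulmxA P) PPt mul1mx De scalemxAr.
Qed.

End Hermitian.

Lemma ord_max_exists (R : realDomainType) n (f : 'I_n.+1 -> R) :
  exists k, forall i, f i <= f k.
Proof.
by case: (@arg_maxP _ _ _ ord0 xpredT f erefl) => k _ kmax; exists k => i; apply: kmax.
Qed.

Section RealSymmetric.
Variable R : rcfType.
Local Notation toC := (real_complex R).
Local Open Scope sesquilinear_scope.

Lemma realmx_row_max n (d : 'rV[R[i]]_n.+1) :
  d \is a realmx -> exists k, forall i, d 0 i <= d 0 k.
Proof.
move=> dR; have [k kmax] := ord_max_exists (fun i => complex.Re (d 0 i)).
exists k => i; rewrite -(RRe_real (mxOverP dR 0 i)) -(RRe_real (mxOverP dR 0 k)).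
by rewrite lecR.
Qed.

Lemma hermitian_top_eigen n (Sc : 'M[R[i]]_n.+1) : Sc \is hermsymmx ->
  exists mu : R, (exists2 z : 'cV_n.+1, z != 0 & Sc *m z = toC mu *: z) /\
    forall x : 'cV_n.+1, (x^t* *m (Sc *m x)) 0 0 <= toC mu * (x^t* *m x) 0 0.
Proof.
move=> Sh; set P := spectralmx Sc; set d := spectral_diag Sc.
have Pu : P \is unitarymx := spectral_unitarymx Sc.
have SE : Sc = P^t* *m diag_mx d *m P.
  by rewrite -invmx_unitary //; apply/orthomx_spectralP/hermitian_normalmx.
have dR := hermitian_spectral_diag_real Sh.
have [k dk] := realmx_row_max dR.
have dkE : d 0 k = toC (complex.Re (d 0 k)) by rewrite RRe_real //; exact: (mxOverP dR 0 k).
exists (complex.Re (d 0 k)); split.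
  by rewrite -dkE SE; exact: unitary_spectral_eigen.
move=> x; have PtP : P^t* *m P = 1%:M by apply/mulmx1C/unitarymxP.
have xPx : x^t* *m x = (P *m x)^t* *m (P *m x).
  by rewrite trmx_mul map_mxM mulmxA -(mulmxA _ _ P) PtP mulmx1.
have xSx : x^t* *m (Sc *m x) = (P *m x)^t* *m (diag_mx d *m (P *m x)).
  by rewrite SE trmx_mul map_mxM !mulmxA.
by rewrite xSx xPx -dkE; apply: diag_form_le.
Qed.

Lemma conjC_real_complex (r : R) : (toC r)^* = toC r.
Proof. by apply/CrealP/complex_realP; exists r. Qed.

Lemma Remx_real_mul m k p (S : 'M[R]_(m, k)) (z : 'M[R[i]]_(k, p)) :
  map_mx (@complex.Re R) (map_mx toC S *m z) = S *m map_mx (@complex.Re R) z.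
Proof.
apply/matrixP => i j; rewrite !mxE (raddf_sum (@complex.Re R : Rcomplex R -> R)).
by apply: eq_bigr => l _; rewrite !mxE; case: (z l j) => a b /=; rewrite mul0r subr0.
Qed.

Lemma Immx_real_mul m k p (S : 'M[R]_(m, k)) (z : 'M[R[i]]_(k, p)) :
  map_mx (@complex.Im R) (map_mx toC S *m z) = S *m map_mx (@complex.Im R) z.
Proof.
apply/matrixP => i j; rewrite !mxE (raddf_sum (@complex.Im R : Rcomplex R -> R)).
by apply: eq_bigr => l _; rewrite !mxE; case: (z l j) => a b /=; rewrite mul0r addr0.
Qed.

Lemma real_eigenvector n (S : 'M[R]_n) (mu : R) (z : 'cV[R[i]]_n) :
  z != 0 -> map_mx toC S *m z = toC mu *: z ->
  exists2 w : 'cV[R]_n, w != 0 & S *m w = mu *: w.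
Proof.
move=> z0 Sz; set zr := map_mx (@complex.Re R) z; set zi := map_mx (@complex.Im R) z.
have Szr : S *m zr = mu *: zr.
  rewrite -Remx_real_mul Sz; apply/matrixP => i j; rewrite !mxE.
  by case: (z i j) => a b /=; rewrite mul0r subr0.
have Szi : S *m zi = mu *: zi.
  rewrite -Immx_real_mul Sz; apply/matrixP => i j; rewrite !mxE.
  by case: (z i j) => a b /=; rewrite mul0r addr0.
have [zr0|] := eqVneq zr 0; last by exists zr.
exists zi => //; apply: contraNneq z0 => zi0; apply/eqP/matrixP => i j.
move/matrixP/(_ i j): zr0; move/matrixP/(_ i j): zi0; rewrite !mxE.
by case: (z i j) => a b /= -> ->.
Qed.

End RealSymmetric.

Lemma symmetric_eigen_ge_rayleigh (R : rcfType) n (S : 'M[R]_n) (x : 'cV[R]_n) :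
  S^T = S -> vdot x x = 1 ->
  exists mu (w : 'cV[R]_n), [/\ w != 0, S *m w = mu *: w & vdot x (S *m x) <= mu].
Proof.
case: n S x => [|n] S x SS x1.
  by move: x1; rewrite /vdot mxE big_ord0 => /eqP; rewrite eq_sym oner_eq0.
pose toC := real_complex R.
have SCh : map_mx toC S \is hermsymmx.
  apply/is_hermitianmxP; rewrite expr0 scale1r; apply/matrixP => i j.
  by rewrite !mxE conjC_real_complex -[in RHS]SS mxE.
have [mu [[z z0 Sz] rayleigh]] := hermitian_top_eigen SCh.
have [w w0 Sw] := real_eigenvector z0 Sz.
exists mu, w; split => //.
have xC : map_mx Num.conj (map_mx toC x)^T = map_mx toC x^T.
  by apply/matrixP => i j; rewrite !mxE conjC_real_complex.
have := rayleigh (map_mx toC x).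
by rewrite xC -!map_mxM ![map_mx toC _ 0 0]mxE -[(x^T *m x) 0 0]/(vdot x x) x1 mulr1 lecR.
Qed.

Lemma top_eigenvector_rayleigh (R : rcfType) n (M : 'M[R]_n) (u x : 'cV[R]_n) :
  M^T = M -> vnorm u = 1 -> top_eigenvector M u -> vnorm x = 1 ->
  vdot x (M *m x) <= vdot u (M *m u).
Proof.
move=> MM u1 [lam [_ Mu top]] x1.
have [mu [w [w0 Mw xMx]]] := symmetric_eigen_ge_rayleigh MM (vdot_unit x1).
by rewrite Mu vdotZr vdot_unit // mulr1 (le_trans xMx) // (top mu w).
Qed.

Theorem mainTheorem9 :
  exists K : nat,
  forall (R : rcfType) (n : nat) (v0 : 'cV[R]_n) (tau eps C : R)
         (A : 'M[R]_(n * n, n)) (E : 'M[R]_n),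
    vnorm v0 = 1 -> 0 < tau -> 0 <= eps -> 0 <= C ->
    A^T *m A = C%:M + E ->
    opnorm_le E (eps * tau ^+ 2) ->
    vnorm (A^T *m kron2 v0) <= eps * tau ->
    let T := tau *: (kron2 v0 *m v0^T) + A in
    forall u : 'cV[R]_n,
      vnorm u = 1 -> top_eigenvector (T^T *m T) u ->
      1 - K%:R * eps <= vdot u v0 ^+ 2.
Proof.
exists 6%N => R n v0 tau eps C A E v0n tau_gt0 eps_ge0 _ gramA Eop w0n T u un top.
have v01 := vdot_unit v0n; have u1 := vdot_unit un.
have gram_sym : (T^T *m T)^T = T^T *m T by rewrite trmx_mul trmxK.
have := top_eigenvector_rayleigh gram_sym un top v0n.
rewrite /T !(spiked_gram_form tau v01 gramA) v01 u1 (vdotC u v0).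
set c := vdot v0 u; set w0 := A^T *m kron2 v0 => rayleigh.
have c_le1 : `|c| <= 1 by rewrite -un normr_vdot_unit_le.
have w0u : `|vdot w0 u| <= eps * tau.
  by rewrite vdotC (le_trans (normr_vdot_unit_le _ u1)).
have w0v0 : `|vdot w0 v0| <= eps * tau.
  by rewrite vdotC (le_trans (normr_vdot_unit_le _ v01)).
have Eu := opnorm_le_form Eop un; have Ev0 := opnorm_le_form Eop v0n.
have cw0u : c * vdot w0 u <= eps * tau.
  rewrite (le_trans (ler_norm _)) // normrM -[eps * tau]mul1r.
  by rewrite ler_pM ?normr_ge0.
move: w0v0 Eu Ev0; rewrite !ler_norml => /andP[w0v0 _] /andP[_ Eu] /andP[Ev0 _].
have : tau ^+ 2 * (1 - 6%:R * eps - c ^+ 2) <= 0.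
  have h1 : tau * (c * vdot w0 u) <= tau * (eps * tau) by rewrite ler_pM2l.
  have h2 : tau * - (eps * tau) <= tau * vdot w0 v0 by rewrite ler_pM2l.
  rewrite expr1n in rayleigh; lra.
by rewrite pmulr_rle0 ?exprn_gt0 //; lra.
Qed.
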